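(* Let $f:\mathbb{R}^n\to\mathbb{R}$ be convex and $\beta$-smooth, let $x^k\in\mathbb{R}^n$, and let $\hat f^k:\mathbb{R}^n\to\mathbb{R}$ satisfy: (a) $\hat f^k$ is convex; (b) $\hat f^k(x)\ge f(x^k)+\langle\nabla f(x^k),x-x^k\rangle$ for all $x$; (c) $\hat f^k(x)\le f(x)$ for all $x$. Then for all $x\in\mathbb{R}^n$, $$f(x)\le \hat f^k(x)+\tfrac{\beta}{2}\|x-x^k\|^2,$$ and $$\|\hat g-\nabla f(x)\|\le\beta\|x-x^k\|\quad\text{for all }\hat g\in\partial\hat f^k(x).$$
   Context: $f$ is $\beta$-smooth means differentiable with $\|\nabla f(x)-\nabla f(y)\|\le\beta\|x-y\|$ for all $x,y$. $\|\cdot\|$ is the Euclidean norm. *)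

(* R^n is modelled as row vectors 'rV[R]_n over R : realType. *)
From HB Require Import structures.
From mathcomp Require Import all_boot all_order all_algebra.
From mathcomp Require Import all_classical all_reals all_analysis.
Set Implicit Arguments. Unset Strict Implicit. Unset Printing Implicit Defensive.
Import Order.TTheory GRing.Theory Num.Theory.
Import numFieldNormedType.Exports.
Local Open Scope ring_scope.

Definition dotv {R : realType} {n : nat} (u v : 'rV[R]_n) : R :=
  \sum_(i < n) u ord0 i * v ord0 i.

(* Euclidean norm ||v|| = sqrt <v, v> (the library norm on matrices is the sup norm) *)
Definition enorm {R : realType} {n : nat} (v : 'rV[R]_n) : R :=
  Num.sqrt (dotv v v).

Definition is_gradient {R : realType} {n : nat}
    (f : 'rV[R]_n -> R) (g : 'rV[R]_n -> 'rV[R]_n) : Prop :=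
  forall x, differentiable f x /\ forall h, 'd f x h = dotv (g x) h.

Definition convex_fun {R : realType} {n : nat} (f : 'rV[R]_n -> R) : Prop :=
  forall (x y : 'rV[R]_n) (t : R), 0 <= t -> t <= 1 ->
    f (t *: x + (1 - t) *: y) <= t * f x + (1 - t) * f y.

Definition smooth_with {R : realType} {n : nat} (beta : R)
    (f : 'rV[R]_n -> R) (g : 'rV[R]_n -> 'rV[R]_n) : Prop :=
  is_gradient f g /\ forall x y, enorm (g x - g y) <= beta * enorm (x - y).

Definition subgrad {R : realType} {n : nat} (h : 'rV[R]_n -> R)
    (x gh : 'rV[R]_n) : Prop :=
  forall y, h x + dotv gh (y - x) <= h y.

(* Along the segment from x to y, beta-smoothness bounds the growth of the
   directional derivative, which yields the descent inequality
   f y <= f x + <grad f x, y - x> + beta/2 |y - x|^2.  Applied at x^k and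
   combined with (b), it gives the first claim.  For the second, chain
   fk x + <g, y - x> <= fk y <= f y <= f x + <grad f x, y - x> + beta/2 |y - x|^2
   with f x <= fk x + beta/2 |x - x^k|^2: the linear function
   y |-> <g - grad f x, y - x> is bounded by a quadratic, and testing it along
   y = x + s (g - grad f x) for the right step s bounds |g - grad f x|. *)
From HB Require Import structures.
From mathcomp Require Import all_boot all_order all_algebra.
From mathcomp Require Import all_classical all_reals all_analysis.
From mathcomp Require Import ring lra.
Import Order.TTheory GRing.Theory Num.Theory.
Import numFieldNormedType.Exports.
Local Open Scope ring_scope.

Section EuclideanGeometry.
Context {R : realType} {n : nat}.
Implicit Types (u v w : 'rV[R]_n) (a : R).

Lemma dotvC u v : dotv u v = dotv v u.
Proof. by apply: eq_bigr => i _; rewrite mulrC. Qed.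

Lemma dotvDl u v w : dotv (u + v) w = dotv u w + dotv v w.
Proof. by rewrite /dotv -big_split; apply: eq_bigr => i _; rewrite !mxE mulrDl. Qed.

Lemma dotvZl a u v : dotv (a *: u) v = a * dotv u v.
Proof. by rewrite /dotv mulr_sumr; apply: eq_bigr => i _; rewrite !mxE mulrA. Qed.

Lemma dotvBl u v w : dotv (u - v) w = dotv u w - dotv v w.
Proof. by rewrite dotvDl -scaleN1r dotvZl mulN1r. Qed.

Lemma dotvZr a u v : dotv v (a *: u) = a * dotv v u.
Proof. by rewrite !(dotvC v) dotvZl. Qed.

Lemma dotvBr u v w : dotv w (u - v) = dotv w u - dotv w v.
Proof. by rewrite !(dotvC w) dotvBl. Qed.

Lemma dotv0l v : dotv 0 v = 0.
Proof. by rewrite /dotv big1 // => i _; rewrite mxE mul0r. Qed.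

Lemma dotvv_ge0 v : 0 <= dotv v v.
Proof. by apply: sumr_ge0 => i _; rewrite -expr2 sqr_ge0. Qed.

Lemma dotvv_eq0 v : (dotv v v == 0) = (v == 0).
Proof.
apply/idP/eqP => [|->]; last by rewrite dotv0l.
rewrite psumr_eq0 => [/allP v0|i _]; last by rewrite -expr2 sqr_ge0.
apply/rowP => i; rewrite mxE.
by have /= := v0 i (mem_index_enum i); rewrite mulf_eq0 orbb => /eqP.
Qed.

Lemma enorm_ge0 v : 0 <= enorm v.
Proof. exact: sqrtr_ge0. Qed.

Lemma enorm_sqr v : enorm v ^+ 2 = dotv v v.
Proof. by rewrite sqr_sqrtr // dotvv_ge0. Qed.

Lemma enorm_eq0 v : (enorm v == 0) = (v == 0).
Proof. by rewrite -sqrf_eq0 enorm_sqr dotvv_eq0. Qed.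

Lemma enormZ a v : enorm (a *: v) = `|a| * enorm v.
Proof. by rewrite /enorm dotvZl dotvZr mulrA -expr2 sqrtrM ?sqr_ge0 // sqrtr_sqr. Qed.

Lemma cauchy_schwarz u v : dotv u v <= enorm u * enorm v.
Proof.
have [->|u0] := eqVneq u 0; first by rewrite dotv0l mulr_ge0 ?enorm_ge0.
have [->|v0] := eqVneq v 0; first by rewrite dotvC dotv0l mulr_ge0 ?enorm_ge0.
set a := enorm u; set b := enorm v.
have ab_gt0 : 0 < a * b by rewrite mulr_gt0 // lt0r enorm_eq0 ?u0 ?v0 enorm_ge0.
(* expand 0 <= |b u - a v|^2 = 2 a b (a b - <u, v>) *)
have := dotvv_ge0 (b *: u - a *: v).
rewrite !(dotvBl, dotvBr, dotvZl, dotvZr) -!enorm_sqr -/a -/b (dotvC v u) => sq_ge0.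
by rewrite -(ler_pM2l ab_gt0); nra.
Qed.

End EuclideanGeometry.

Section Smoothness.
Context {R : realType} {n : nat} {beta : R}.
Context {f : 'rV[R]_n -> R} {g : 'rV[R]_n -> 'rV[R]_n}.

Lemma is_derive_along_line (x d : 'rV[R]_n) (c : R) : is_gradient f g ->
  is_derive c 1 (fun t : R => f (x + t *: d)) (dotv (g (x + c *: d)) d).
Proof.
move=> grad_fg; pose line (t : R) := x + t *: d.
have line_diff t : is_diff t line (fun s : R => s *: d).
  by rewrite /line -[X in is_diff _ _ X]add0r; apply: is_diffD.
have [df_line dfE] := grad_fg (line c).
have dcomp : differentiable (f \o line) c by exact: differentiable_comp.
have : is_derive c 1 (f \o line) ('D_1 (f \o line) c).
  by apply: derivableP; apply/derivable1_diffP.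
by rewrite deriveE // diff_comp // /= diff_val scale1r dfE.
Qed.

Hypothesis smooth_fg : smooth_with beta f g.

Lemma smooth_beta_mul_ge0 (x y : 'rV[R]_n) : 0 <= beta * enorm (x - y).
Proof. exact: le_trans (enorm_ge0 _) (smooth_fg.2 x y). Qed.

Lemma smooth_dotv_gradB (x d : 'rV[R]_n) (c : R) : 0 <= c ->
  dotv (g (x + c *: d) - g x) d <= beta * c * enorm d ^+ 2.
Proof.
move=> c_ge0; apply: le_trans (cauchy_schwarz _ _) _.
have lip := smooth_fg.2 (x + c *: d) x.
rewrite [x + _ - x]addrC addKr enormZ ger0_norm // in lip.
by rewrite expr2 mulrA; apply: ler_wpM2r; rewrite ?enorm_ge0 // -mulrA.
Qed.

Lemma descent (x y : 'rV[R]_n) :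
  f y <= f x + dotv (g x) (y - x) + beta / 2 * enorm (y - x) ^+ 2.
Proof.
set d := y - x; set a := dotv (g x) d; set b := beta / 2 * enorm d ^+ 2.
pose phi t := f (x + t *: d) - a * t - b * (t * t).
have phi' (c : R) : is_derive c 1 phi (dotv (g (x + c *: d)) d - a - b * (c + c)).
  have lin : is_derive c (1 : R) (a \*: (@id R)) (a *: (1 : R)) by exact: is_deriveZ.
  have quad : is_derive c (1 : R) (b \*: ((@id R) \* (@id R)))
      (b *: (c *: (1 : R) + c *: (1 : R))) by exact: is_deriveZ.
  have := is_deriveB (is_deriveB (is_derive_along_line x d c smooth_fg.1) lin) quad.
  by rewrite /GRing.scale /= !mulr1.
have phi_cont := derivable_within_continuous (i := `[0, 1]%R)
  (fun t _ => @ex_derive _ _ _ _ _ _ _ (phi' t)).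
have [c c01 mvt] := MVT_segment ler01 (fun t _ => phi' t) phi_cont.
have /andP[c_ge0 _] : (0 <= c) && (c <= 1) by move: c01; rewrite in_itv.
have phi'_le0 : dotv (g (x + c *: d)) d - a - b * (c + c) <= 0.
  have := smooth_dotv_gradB x d c c_ge0; rewrite /a /b -dotvBl; lra.
have : phi 1 - phi 0 <= 0 by rewrite mvt subr0 mulr1.
have x_add_d : x + d = y by rewrite addrC subrK.
rewrite /phi scale1r scale0r addr0 x_add_d !mulr1 !mulr0 !subr0; lra.
Qed.

End Smoothness.

Section SandwichedModel.
Context {R : realType} {n : nat} {beta : R}.
Context {f : 'rV[R]_n -> R} {g : 'rV[R]_n -> 'rV[R]_n}.
Context {xk : 'rV[R]_n} {fk : 'rV[R]_n -> R}.
Hypothesis smooth_fg : smooth_with beta f g.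
Hypothesis fk_ge_tangent : forall x, f xk + dotv (g xk) (x - xk) <= fk x.
Hypothesis fk_le_f : forall x, fk x <= f x.

Lemma model_gap x : f x <= fk x + beta / 2 * enorm (x - xk) ^+ 2.
Proof. have := descent smooth_fg xk x; have := fk_ge_tangent x; lra. Qed.

Lemma subgrad_model_dotv {x gh : 'rV[R]_n} : subgrad fk x gh -> forall y,
  dotv (gh - g x) (y - x) <=
    beta / 2 * (enorm (x - xk) ^+ 2 + enorm (y - x) ^+ 2).
Proof.
move=> sub y; have := sub y; have := descent smooth_fg x y.
have := fk_le_f y; have := model_gap x; rewrite dotvBl; lra.
Qed.

End SandwichedModel.

Lemma le_of_linear_le_quadratic (R : realType) (a b c : R) :
  0 <= a -> 0 <= b -> 0 <= c * b ->
  (forall s, s * a ^+ 2 <= c / 2 * (b ^+ 2 + s ^+ 2 * a ^+ 2)) -> a <= c * b.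
Proof.
move=> a_ge0 b_ge0 cb_ge0 lin_le_quad.
have [->|a_neq0] := eqVneq a 0; first exact: cb_ge0.
have a_gt0 : 0 < a by rewrite lt0r a_neq0.
have [b0|b_neq0] := eqVneq b 0.
  (* a small step s with c s < 1 contradicts s a^2 <= c s^2 a^2 / 2 *)
  pose s := (1 + `|c|)^-1.
  have s_gt0 : 0 < s by rewrite invr_gt0 ltr_pwDl.
  have cs_lt1 : c * s < 1.
    rewrite ltr_pdivrMr ?ltr_pwDl // mul1r; have := ler_norm c; lra.
  have := lin_le_quad s; rewrite b0 expr0n add0r.
  have -> : c / 2 * (s ^+ 2 * a ^+ 2) = c * s / 2 * (s * a ^+ 2) by ring.
  have : 0 < s * a ^+ 2 by rewrite mulr_gt0 ?exprn_gt0.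
  nra.
have b_gt0 : 0 < b by rewrite lt0r b_neq0.
have := lin_le_quad (b / a).
have -> : b / a * a ^+ 2 = b * a by field; rewrite lt0r_neq0.
have -> : (b / a) ^+ 2 * a ^+ 2 = b ^+ 2 by field; rewrite lt0r_neq0.
move=> step_b_over_a; rewrite -(ler_pM2l b_gt0); nra.
Qed.

Theorem lemma3 (R : realType) (n : nat) (beta : R)
  (f : 'rV[R]_n -> R) (gradf : 'rV[R]_n -> 'rV[R]_n)
  (xk : 'rV[R]_n) (fk : 'rV[R]_n -> R) :
  convex_fun f -> smooth_with beta f gradf ->
  convex_fun fk ->
  (forall x, f xk + dotv (gradf xk) (x - xk) <= fk x) ->
  (forall x, fk x <= f x) ->
  (forall x, f x <= fk x + beta / 2 * enorm (x - xk) ^+ 2) /\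
  (forall x gh, subgrad fk x gh ->
     enorm (gh - gradf x) <= beta * enorm (x - xk)).
Proof.
move=> _ smooth_f _ fk_ge_tangent fk_le_f.
split=> [|x gh sub_gh]; first exact: model_gap smooth_f fk_ge_tangent.
apply: le_of_linear_le_quadratic; rewrite ?enorm_ge0 ?(smooth_beta_mul_ge0 smooth_f) //.
move=> s; set v := gh - gradf x.
have := subgrad_model_dotv smooth_f fk_ge_tangent fk_le_f sub_gh (x + s *: v).
by rewrite [x + _ - x]addrC addKr dotvZr enormZ exprMn real_normK ?num_real // -enorm_sqr -/v.
Qed.
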